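(* Let $z\in\mathbb{R}^n$, $\lambda_1,\lambda_2>0$, $l\le0\le u$ in $\mathbb{R}^n$, $\omega_i(\alpha)=\lambda_2|\alpha|_0+\delta_{[l_i,u_i]}(\alpha)$, $H(0)=-\lambda_1$, $H(s)=\min_{y\in\mathbb{R}^s}\{\frac12\|y-z_{1:s}\|^2+\lambda_1\sum_{j=1}^{s-1}|y_j-y_{j+1}|_0+\sum_{j=1}^s\omega_j(y_j)\}$ for $s\in[n]$, and $P_s(i,\alpha)=H(i)+\frac12\|\alpha\mathbf{1}-z_{i+1:s}\|^2+\sum_{j=i+1}^s\omega_j(\alpha)+\lambda_1$ for $i\in[0\!:\!s-1]$, $\alpha\in\mathbb{R}$. For each $s\in[n]$ let $P_s^*(\alpha)=\min_{i\in[0:s-1]}P_s(i,\alpha)$. Then: (i) for all $\alpha\in\mathbb{R}$, $P_1^*(\alpha)=\frac12(\alpha-z_1)^2+\omega_1(\alpha)$ and, for $s\in[2\!:\!n]$, $$P_s^*(\alpha)=\min\Big\{P_{s-1}^*(\alpha),\ \min_{\alpha'\in\mathbb{R}}P_{s-1}^*(\alpha')+\lambda_1\Big\}+\tfrac12(\alpha-z_s)^2+\omega_s(\alpha);$$ (ii) let $\mathcal{R}_1^0=\mathbb{R}$ and, for $s\in[2\!:\!n]$, $\mathcal{R}_s^{s-1}=\{\alpha\in\mathbb{R}: P_{s-1}^*(\alpha)\ge\min_{\alpha'\in\mathbb{R}}P_{s-1}^*(\alpha')+\lambda_1\}$ and $\mathcal{R}_s^i=\mathcal{R}_{s-1}^i\cap(\mathcal{R}_s^{s-1})^c$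 for $i\in[0\!:\!s-2]$. Then (a) for each $s\in[2\!:\!n]$, $\bigcup_{i\in[0:s-1]}\mathcal{R}_s^i=\mathbb{R}$ and $\mathcal{R}_s^i\cap\mathcal{R}_s^j=\emptyset$ for all $i\neq j$ in $[0\!:\!s-1]$; (b) for each $s\in[n]$ and $i\in[0\!:\!s-1]$, $P_s^*(\alpha)=P_s(i,\alpha)$ whenever $\alpha\in\mathcal{R}_s^i$.
   Context: $|t|_0=0$ if $t=0$ and $1$ otherwise; $\delta_{[a,b]}$ is the indicator of $[a,b]$; $[j\!:\!k]=\{j,\dots,k\}$, $[n]=[1\!:\!n]$, $z_{j:k}=(z_j,\dots,z_k)$, $\mathbf 1$ the all-ones vector; $(\cdot)^c$ denotes complement in $\mathbb{R}$. *)

(* R : realType, extended reals \bar R for the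
   indicator functions delta_[l_i,u_i] (value +oo outside the box). *)
From HB Require Import structures.
From mathcomp Require Import all_boot all_order all_algebra.
From mathcomp Require Import all_classical all_reals ereal.
Set Implicit Arguments. Unset Strict Implicit. Unset Printing Implicit Defensive.
Import Order.TTheory GRing.Theory Num.Theory.
Local Open Scope classical_set_scope.
Local Open Scope ring_scope.
Local Open Scope ereal_scope.

(* vectors z, l, u in R^n are sequences nat -> R indexed 1..n (only
   indices 1..n are ever used). *)

Definition omega (R : realType) (lam2 : R) (l u : nat -> R) (i : nat) (a : R)
  : \bar R :=
  (lam2 * (a != 0)%:R)%:E + (if ((l i <= a) && (a <= u i))%R then 0 else +oo).

(* objective of H(s) at y (only y_1..y_s matter) *)
Definition Hobj (R : realType) (lam1 lam2 : R) (z l u : nat -> R) (s : nat)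
  (y : nat -> R) : \bar R :=
  ((2^-1 * \sum_(1 <= j < s.+1) (y j - z j) ^+ 2)
   + lam1 * \sum_(1 <= j < s) (y j != y j.+1)%:R)%R%:E
  + \sum_(1 <= j < s.+1) omega lam2 l u j (y j).

Definition H (R : realType) (lam1 lam2 : R) (z l u : nat -> R) (s : nat)
  : \bar R :=
  if s == 0%N then (- lam1)%:E
  else ereal_inf [set Hobj lam1 lam2 z l u s y | y in [set: nat -> R]].

Definition P (R : realType) (lam1 lam2 : R) (z l u : nat -> R) (s i : nat)
  (a : R) : \bar R :=
  H lam1 lam2 z l u i
  + (2^-1 * \sum_(i.+1 <= j < s.+1) (a - z j) ^+ 2)%R%:E
  + \sum_(i.+1 <= j < s.+1) omega lam2 l u j a
  + lam1%:E.

Definition Pstar (R : realType) (lam1 lam2 : R) (z l u : nat -> R) (s : nat)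
  (a : R) : \bar R :=
  \big[Order.min/+oo]_(0 <= i < s) P lam1 lam2 z l u s i a.

Definition Rtop (R : realType) (lam1 lam2 : R) (z l u : nat -> R) (s : nat)
  : set R :=
  [set a | ereal_inf (range (Pstar lam1 lam2 z l u s.-1)) + lam1%:E
           <= Pstar lam1 lam2 z l u s.-1 a].

(* Regions R_s^i; set0 outside the index range i in [0:s-1]. *)
Fixpoint Rg (R : realType) (lam1 lam2 : R) (z l u : nat -> R) (s i : nat)
  : set R :=
  match s with
  | 0%N => set0
  | 1%N => if i == 0%N then setT else set0
  | s'.+1 =>
      if i == s' then Rtop lam1 lam2 z l u s
      else if (i < s')%N then Rg lam1 lam2 z l u s' i `&` ~` Rtop lam1 lam2 z l u s
      else set0
  end.

From Pilot Require Import Defs.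
From HB Require Import structures.
From mathcomp Require Import all_boot all_order all_algebra.
From mathcomp Require Import all_classical all_reals ereal.
Import Order.TTheory GRing.Theory Num.Theory.
Local Open Scope classical_set_scope.
Local Open Scope ring_scope.
Local Open Scope ereal_scope.
Set Implicit Arguments. Unset Strict Implicit. Unset Printing Implicit Defensive.

(* Write P_s(i, a) = H(i) + T_s(i, a), where the tail cost T_s(i, a) prices
   the last block [i+1 : s] held at the value a, plus lam1 for the jump that
   opens it.  Dynamic programming gives inf_a P_s^*(a) = H(s): splicing any
   y on [1 : i] with the block a shows H(s) <= P_s(i, a), and cutting any
   y at its last jump shows that its objective dominates some P_s(i, y_s).
   Passing from s to s+1 adds the stage cost c_{s+1}(a) to every T_s(i, a)
   with i < s, while the new block i = s costs H(s) + lam1 + c_{s+1}(a); this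
   is the recursion (i), and the regions R_s^i of (ii) record which branch of
   the resulting minimum is attained. *)

Section ereal_bigmin.
Variable R : realType.
Implicit Types (x y c : \bar R) (F : nat -> \bar R).

Lemma adde_minl x y c : Order.min x y + c = Order.min (x + c) (y + c).
Proof.
have [xy|yx] := leP x y; first by rewrite !min_l // leeD2r.
by rewrite !min_r // leeD2r // ltW.
Qed.

Lemma bigmin_nat_addr F c n : c != -oo ->
  \big[Order.min/+oo]_(0 <= i < n) F i + c
  = \big[Order.min/+oo]_(0 <= i < n) (F i + c).
Proof.
move=> c_neqNy; apply: (big_morph (+%E^~ c)) => [x y|]; first exact: adde_minl.
by rewrite addye.
Qed.

Lemma bigmin_nat_le F n i : (i < n)%N ->
  \big[Order.min/+oo]_(0 <= j < n) F j <= F i.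
Proof. by move=> lt_in; rewrite ge_bigmin_seq // mem_index_iota. Qed.

Lemma le_bigmin_nat F n x : (forall i, (i < n)%N -> x <= F i) ->
  x <= \big[Order.min/+oo]_(0 <= i < n) F i.
Proof.
move=> le_xF; rewrite big_nat_cond; apply: le_bigmin => [|i /andP[/andP[_]]].
  exact: leey.
by move=> /le_xF.
Qed.

Lemma ereal_inf_le_addr (T : Type) (f : T -> \bar R) x c :
  c != -oo -> ereal_inf (range f) != -oo ->
  (forall t, x <= f t + c) -> x <= ereal_inf (range f) + c.
Proof.
case: c => [c | | //] _ inf_neqNy le_xf; last by rewrite addey // leey.
by rewrite -leeBlDr //; apply/ereal_infP => _ [t _ <-]; rewrite leeBlDr.
Qed.

End ereal_bigmin.

Section dynamic_programming.
Variables (R : realType) (lam1 lam2 : R) (z l u : nat -> R).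
Hypotheses (lam1_ge0 : (0 <= lam1)%R) (lam2_ge0 : (0 <= lam2)%R).

Local Notation omega := (omega lam2 l u).
Local Notation Hobj := (Hobj lam1 lam2 z l u).
Local Notation H := (H lam1 lam2 z l u).
Local Notation P := (P lam1 lam2 z l u).
Local Notation Pstar := (Pstar lam1 lam2 z l u).
Local Notation Rtop := (Rtop lam1 lam2 z l u).
Local Notation Rg := (Rg lam1 lam2 z l u).

Definition stage_cost (s : nat) (a : R) : \bar R :=
  (2^-1 * (a - z s) ^+ 2)%R%:E + omega s a.

Definition tail_cost (s i : nat) (a : R) : \bar R :=
  (2^-1 * \sum_(i.+1 <= j < s.+1) (a - z j) ^+ 2)%R%:E
  + \sum_(i.+1 <= j < s.+1) omega j a + lam1%:E.

Lemma omega_ge0 j a : 0 <= omega j a.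
Proof.
by apply: adde_ge0; [rewrite lee_fin mulr_ge0 | case: ifP => _; rewrite ?leey].
Qed.

Lemma stage_cost_ge0 s a : 0 <= stage_cost s a.
Proof.
by apply: adde_ge0; [rewrite lee_fin mulr_ge0 ?sqr_ge0 | exact: omega_ge0].
Qed.

Lemma tail_cost_ge0 s i a : 0 <= tail_cost s i a.
Proof.
rewrite /tail_cost adde_ge0 ?lee_fin // adde_ge0 ?sume_ge0 // => [|j _].
  by rewrite lee_fin mulr_ge0 ?sumr_ge0 // => j _; rewrite sqr_ge0.
exact: omega_ge0.
Qed.

Lemma Hobj_ge0 s y : 0 <= Hobj s y.
Proof.
apply: adde_ge0; last by apply: sume_ge0 => j _; exact: omega_ge0.
rewrite lee_fin addr_ge0 // mulr_ge0 // sumr_ge0 // => j _.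
exact: sqr_ge0.
Qed.

Lemma H_neqNy s : H s != -oo.
Proof.
rewrite /Defs.H; case: ifP => // _.
suff : 0 <= ereal_inf [set Hobj s y | y in [set: nat -> R]] by case: ereal_inf.
by apply/ereal_infP => _ [y _ <-]; exact: Hobj_ge0.
Qed.

Lemma HE s : (0 < s)%N -> H s = ereal_inf (range (Hobj s)).
Proof. by case: s. Qed.

Lemma P_split s i a : P s i a = H i + tail_cost s i a.
Proof. by rewrite /Defs.P /tail_cost !addeA. Qed.

Lemma tail_costS s i a : (i <= s)%N ->
  tail_cost s.+1 i a = tail_cost s i a + stage_cost s.+1 a.
Proof.
move=> le_is; rewrite /tail_cost /stage_cost !(big_nat_recr s.+1) //= mulrDr EFinD.
(* [big_nat_recr] splits the sum with the ring addition of [\bar R];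
   folding it back into [+%E] lets the [adde] lemmas apply. *)
rewrite -[(_ + omega _ _)%R]/(_ + _)%E addeACA; exact: addeAC.
Qed.

Lemma tail_cost_last s a : tail_cost s.+1 s a = lam1%:E + stage_cost s.+1 a.
Proof. by rewrite /tail_cost /stage_cost !big_nat1 addeC. Qed.

Lemma PS s i a : (i <= s)%N -> P s.+1 i a = P s i a + stage_cost s.+1 a.
Proof. by move=> le_is; rewrite !P_split tail_costS // addeA. Qed.

Lemma P_last s a : P s.+1 s a = H s + lam1%:E + stage_cost s.+1 a.
Proof. by rewrite P_split tail_cost_last addeA. Qed.

Lemma HobjS s y : (0 < s)%N -> Hobj s.+1 y =
  Hobj s y + (lam1 * (y s != y s.+1)%:R)%R%:E + stage_cost s.+1 (y s.+1).
Proof.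
move=> s_gt0; rewrite [LHS]/Defs.Hobj.
rewrite (big_nat_recr s.+1 1 (fun j => (y j - z j) ^+ 2)%R) //.
rewrite (big_nat_recr s 1 (fun j => (y j != y j.+1)%:R)%R) //.
rewrite (big_nat_recr s.+1 1 (fun j => omega j (y j))) //=.
rewrite !mulrDr addrACA !EFinD /stage_cost.
rewrite -[(_ + omega _ _)%R]/(_ + _)%E [Hobj s y]/Defs.Hobj EFinD.
set X := (_ + (lam1 * \sum_(1 <= j < s) _)%:E).
set W := (\sum_(1 <= j < s.+1) _)%R.
rewrite addeACA -[RHS]addeA; congr (_ + _).
by rewrite [RHS]addeCA addeA.
Qed.

Lemma eq_Hobj s y y' : (forall j, (0 < j <= s)%N -> y j = y' j) ->
  Hobj s y = Hobj s y'.
Proof.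
move=> eq_y; rewrite /Defs.Hobj.
congr ((_ * _ + _ * _)%R%:E + _); apply: eq_big_nat => j /andP[j_gt0 lt_js].
- by rewrite eq_y // j_gt0.
- by rewrite !eq_y // ?j_gt0 ?(ltnW lt_js) ?(ltn_trans j_gt0).
- by rewrite eq_y // j_gt0.
Qed.

Lemma P0_Hobj s a : P s 0 a = Hobj s (fun=> a).
Proof.
rewrite P_split /tail_cost /Defs.Hobj /=.
rewrite [X in (lam1 * X)%R]big1 => [|j _]; last by rewrite eqxx.
by rewrite mulr0 addr0 addeCA -EFinD addNr adde0.
Qed.

Definition splice (i : nat) (y : nat -> R) (a : R) (j : nat) : R :=
  if (j <= i)%N then y j else a.

Lemma splice_le i y a j : (j <= i)%N -> splice i y a j = y j.
Proof. by rewrite /splice => ->. Qed.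

Lemma splice_gt i y a j : (i < j)%N -> splice i y a j = a.
Proof. by move=> lt_ij; rewrite /splice leqNgt lt_ij. Qed.

Lemma Hobj_splice s i y a : (0 < i)%N -> (i < s)%N ->
  Hobj s (splice i y a) <= Hobj i y + tail_cost s i a.
Proof.
move=> i_gt0; elim: s => // s IHs; rewrite ltnS leq_eqVlt => /predU1P[<- | lt_is].
  rewrite HobjS // tail_cost_last splice_le // splice_gt // [X in _ <= X]addeA.
  apply: leeD2r; rewrite (@eq_Hobj i _ y) => [|j /andP[_]]; last exact: splice_le.
  by apply: leeD2l; rewrite lee_fin ler_piMr // lern1 leq_b1.
have s_gt0 : (0 < s)%N by apply: leq_trans i_gt0 (ltnW lt_is).
rewrite HobjS // tail_costS; last exact: ltnW.
rewrite (splice_gt _ _ lt_is) (splice_gt _ _ (leqW lt_is)) eqxx mulr0 adde0.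
by rewrite [X in _ <= X]addeA; apply: leeD2r; exact: IHs.
Qed.

Lemma H_le_P s i a : (i < s)%N -> H s <= P s i a.
Proof.
move=> lt_is; have s_gt0 : (0 < s)%N by apply: leq_ltn_trans lt_is.
case: i lt_is => [|i] lt_is.
  by rewrite P0_Hobj HE //; apply: ereal_inf_lbound; exists (fun=> a).
rewrite P_split (HE (ltn0Sn i)); apply: ereal_inf_le_addr => [||y].
- by case: (tail_cost _ _ _) (tail_cost_ge0 s i.+1 a).
- by rewrite -HE ?H_neqNy.
- apply: le_trans (Hobj_splice y a _ lt_is) => //.
  by rewrite HE //; apply: ereal_inf_lbound; eexists.
Qed.

Lemma exists_P_le_Hobj s y : (0 < s)%N ->
  exists2 i, (i < s)%N & P s i (y s) <= Hobj s y.
Proof.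
elim: s => // -[_ _ | s IHs _].
  exists 0%N => //; rewrite P0_Hobj (@eq_Hobj 1 _ y) // => j.
  by rewrite -eqn_leq => /eqP <-.
have [i lt_is le_P] := IHs isT; rewrite HobjS //.
have [eq_y | _] := eqVneq (y s.+1) (y s.+2).
  exists i; first exact: leqW.
  rewrite PS; last exact: ltnW.
  by rewrite -eq_y mulr0 adde0; apply: leeD2r.
exists s.+1 => //; rewrite P_last mulr1; apply: leeD2r; apply: leeD2r.
by rewrite HE //; apply: ereal_inf_lbound; exists y.
Qed.

Lemma inf_Pstar s : (0 < s)%N -> ereal_inf (range (Pstar s)) = H s.
Proof.
move=> s_gt0; apply/eqP; rewrite eq_le; apply/andP; split.
  rewrite HE //; apply/ereal_infP => _ [y _ <-].
  have [i lt_is le_P] := exists_P_le_Hobj y s_gt0.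
  apply: (@le_trans _ _ (Pstar s (y s))).
    by apply: ereal_inf_lbound; exists (y s).
  exact: le_trans (bigmin_nat_le _ lt_is) le_P.
apply/ereal_infP => _ [a _ <-]; apply: le_bigmin_nat => i lt_is.
exact: H_le_P.
Qed.

Lemma Pstar1 a : Pstar 1 a = stage_cost 1 a.
Proof.
rewrite /Defs.Pstar big_nat1 P0_Hobj /Defs.Hobj !big_nat1 big_geq //.
by rewrite mulr0 addr0.
Qed.

Lemma PstarS s a : (0 < s)%N -> Pstar s.+1 a =
  Order.min (Pstar s a) (ereal_inf (range (Pstar s)) + lam1%:E) + stage_cost s.+1 a.
Proof.
move=> s_gt0; rewrite inf_Pstar // /Defs.Pstar big_nat_recr //= P_last adde_minl.
rewrite bigmin_nat_addr; last by case: (stage_cost _ _) (stage_cost_ge0 s.+1 a).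
by congr Order.min; apply: eq_big_nat => i /andP[_ lt_is]; rewrite PS //; exact: ltnW.
Qed.

Lemma Pstar_Rg s i a : Rg s i a -> Pstar s a = P s i a.
Proof.
elim: s i => [|[|s] IHs] i //=.
  by case: eqP => [-> _ | _ []]; rewrite /Defs.Pstar big_nat1.
rewrite PstarS // inf_Pstar //.
have [-> top | _] := eqVneq i s.+1.
  rewrite min_r ?P_last //.
  by rewrite /Defs.Rtop /= inf_Pstar in top.
case: ifP => // lt_is [Ri not_top].
rewrite min_l; last first.
  rewrite /Defs.Rtop /= inf_Pstar // in not_top.
  by apply/ltW; rewrite ltNge; apply/negP.
rewrite (IHs i Ri) [RHS]PS //; exact: ltnW.
Qed.

Lemma Rg_cover s a : (0 < s)%N -> exists2 i, (i < s)%N & Rg s i a.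
Proof.
elim: s => // -[_ _ | s IHs _]; first by exists 0%N.
have [i lt_is Ri] := IHs isT.
have [top | not_top] := pselect (Rtop s.+2 a); first by exists s.+1; rewrite //= eqxx.
exists i; first exact: leqW.
by rewrite /= (ltn_eqF lt_is) lt_is.
Qed.

Lemma Rg_uniq s i j a : Rg s i a -> Rg s j a -> i = j.
Proof.
elim: s i j => [|[|s] IHs] i j //=.
  by case: eqP => [-> | _ []]; case: eqP => [-> | _ []].
have [-> | _] := eqVneq i s.+1; have [-> | _] := eqVneq j s.+1 => //.
- by move=> top; case: ifP => _ // [_ /(_ top)].
- by case: ifP => _ // [_ not_top] /not_top.
- by case: ifP => _ // [Ri _]; case: ifP => _ // [Rj _]; exact: IHs Ri Rj.
Qed.

End dynamic_programming.

Theorem proposition3p4 (R : realType) (n : nat) (z l u : nat -> R)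
  (lam1 lam2 : R) (hlam1 : (0 < lam1)%R) (hlam2 : (0 < lam2)%R)
  (hlu : forall i, (1 <= i <= n)%N -> (l i <= 0)%R /\ (0 <= u i)%R) :
  (* (i) *)
  ((forall a : R, Pstar lam1 lam2 z l u 1 a
      = (2^-1 * (a - z 1%N) ^+ 2)%R%:E + omega lam2 l u 1 a) /\
   (forall s : nat, (2 <= s <= n)%N -> forall a : R,
      Pstar lam1 lam2 z l u s a
      = Order.min (Pstar lam1 lam2 z l u s.-1 a)
          (ereal_inf (range (Pstar lam1 lam2 z l u s.-1)) + lam1%:E)
        + (2^-1 * (a - z s) ^+ 2)%R%:E + omega lam2 l u s a)) /\
  (* (ii)(a) *)
  (forall s : nat, (2 <= s <= n)%N ->
     \bigcup_(i in `I_s) Rg lam1 lam2 z l u s i = setT /\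
     (forall i j : nat, (i < s)%N -> (j < s)%N -> i <> j ->
        Rg lam1 lam2 z l u s i `&` Rg lam1 lam2 z l u s j = set0)) /\
  (* (ii)(b) *)
  (forall s i : nat, (1 <= s <= n)%N -> (i < s)%N -> forall a : R,
     Rg lam1 lam2 z l u s i a ->
     Pstar lam1 lam2 z l u s a = P lam1 lam2 z l u s i a).
Proof.
have lam1_ge0 := ltW hlam1; have lam2_ge0 := ltW hlam2.
split; [split | split].
- by move=> a; rewrite Pstar1.
- by move=> [|[|s]] // _ a; rewrite PstarS // addeA.
- move=> s /andP[s_gt1 _]; split.
    apply/seteqP; split=> // a _.
    by have [i lt_is Ri] := Rg_cover lam1 lam2 z l u a (ltnW s_gt1); exists i.
  move=> i j _ _ ne_ij; apply/seteqP; split=> // a [Ri Rj].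
  exact: ne_ij (Rg_uniq Ri Rj).
- by move=> s i _ _ a; exact: Pstar_Rg.
Qed.
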